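(* Consider the $\mathsf{HFOL}$ signatures: $\Delta$ with one nominal $k$, one flexible sort $s$ and one flexible constant $c:\to s$; $\Delta^1$ with nominals $k,k_1$, one rigid sort $s$ and one flexible constant $c:\to s$; $\Delta^2$ with nominals $k,k_2$, one flexible sort $s$ and flexible constants $c:\to s$, $c_2:\to s$; $\Delta'$ with nominals $k,k_1,k_2$, one rigid sort $s$ and flexible constants $c:\to s$, $c_2:\to s$. Let $\chi_1:\Delta\hookrightarrow\Delta^1$, $\chi_2:\Delta\hookrightarrow\Delta^2$, $\upsilon_1:\Delta^1\hookrightarrow\Delta'$, $\upsilon_2:\Delta^2\hookrightarrow\Delta'$ be the inclusions (this square is a pushout). Then this square is not a Craig Interpolation square.
   Context: $\mathsf{HFOL}$ (hybrid first-order logic with rigid symbols): signatures $\Delta=(\Sigma^{\mathtt n},\Sigma^{\mathtt r}\subseteq\Sigma)$ with $\Sigma$ a many-sorted first-order signature, $\Sigma^{\mathtt r}$ its rigid part (interpreted identically in all worlds), $\Sigma^{\mathtt n}$ a single-sorted signature of nominals (constants) and modalities; signature morphisms are pairs of first-order signature morphisms mapping rigid symbols to rigid symbols. Kripke structures $(W,M)$: a $\Sigma^{\mathtt n}$-structure $W$ of worlds and $\Sigma$-structures $M_w$ agreeing on rigid symbols. Sentences are built from atoms (nominals, unary modalities, equations and relations between hybrid terms, where $@_k\sigma$ denotes $\sigma$ evaluated at world $W_k$) using $@_k$, $\neg$, finite $\vee$, store $\downarrow z$, existential (hence universal) quantification over nominal variables and variables of rigid sorts, and $\langle\lambda\rangle$;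 $(W,M)\models\varphi$ means $\varphi$ holds at every world; $\Phi\models\Psi$ is global consequence. A commutative square $\chi_1,\chi_2,\upsilon_1,\upsilon_2$ (with $\chi_i:\Delta\to\Delta^i$, $\upsilon_i:\Delta^i\to\Delta'$) is a Craig Interpolation (CI) square if for all $\Phi^1\subseteq\mathrm{Sen}(\Delta^1)$, $\Phi^2\subseteq\mathrm{Sen}(\Delta^2)$ with $\upsilon_1(\Phi^1)\models\upsilon_2(\Phi^2)$ there is $\Phi\subseteq\mathrm{Sen}(\Delta)$ with $\Phi^1\models\chi_1(\Phi)$ and $\chi_2(\Phi)\models\Phi^2$. *)

(* A fragment of HFOL sufficient for the signatures of Lemma 5.14:
   signatures whose hybrid part Sigma^n consists of nominals only (no
   modalities), whose first-order part has a single sort s (rigid or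
   flexible) and only constants of sort s (no other function/relation
   symbols). *)



Record hsig := HSig {
  Nom : Type;
  Cst : Type;
  srigid : bool;
  crigid : Cst -> bool;
  crigid_sort : forall c, crigid c = true -> srigid = true
}.

Record hmor (S T : hsig) := HMor {
  mnom : Nom S -> Nom T;
  mcst : Cst S -> Cst T;
  msrigid : srigid S = true -> srigid T = true;
  mcrigid : forall c, crigid S c = true -> crigid T (mcst c) = true
}.

(* V : nominal variables in scope, X : variables of (rigid) sort s in scope *)
Inductive nterm (S : hsig) (V : Type) : Type :=
| NNom : Nom S -> nterm S V
| NVar : V -> nterm S V.

Inductive term (S : hsig) (V X : Type) : Type :=
| TCst : Cst S -> term S V X
| TVar : srigid S = true -> X -> term S V X
| TAt : srigid S = true -> nterm S V -> term S V X -> term S V X.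

Inductive form (S : hsig) : Type -> Type -> Type :=
| FNom V X : nterm S V -> form S V X
| FEq V X : term S V X -> term S V X -> form S V X
| FAt V X : nterm S V -> form S V X -> form S V X
| FNot V X : form S V X -> form S V X
| FFalse V X : form S V X
| FOr V X : form S V X -> form S V X -> form S V X
| FStore V X : form S (option V) X -> form S V X
| FExN V X : form S (option V) X -> form S V X
| FExV V X : srigid S = true -> form S V (option X) -> form S V X.

Arguments NNom {S V} _.
Arguments NVar {S V} _.
Arguments TCst {S V X} _.
Arguments TVar {S V X} _ _.
Arguments TAt {S V X} _ _ _.
Arguments FNom {S V X} _.
Arguments FEq {S V X} _ _.
Arguments FAt {S V X} _ _.
Arguments FNot {S V X} _.
Arguments FFalse {S V X}.
Arguments FOr {S V X} _ _.
Arguments FStore {S V X} _.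
Arguments FExN {S V X} _.
Arguments FExV {S V X} _ _.

Definition Sen (S : hsig) := form S Empty_set Empty_set.

(* ---------- Kripke structures ----------
   The carrier M_{w,s} is represented as the subset [dom w] of a type A;
   for a rigid sort all worlds have the same carrier. *)
Record kripke (S : hsig) := Kripke {
  W : Type;
  A : Type;
  nomI : Nom S -> W;
  dom : W -> A -> Prop;
  cstI : Cst S -> W -> A;
  cstI_dom : forall c w, dom w (cstI c w);
  dom_rigid : srigid S = true -> forall w w' a, dom w a <-> dom w' a;
  cst_rigid : forall c, crigid S c = true -> forall w w', cstI c w = cstI c w'
}.

Arguments W {S} _.
Arguments A {S} _.
Arguments nomI {S} _ _.
Arguments dom {S} _ _ _.
Arguments cstI {S} _ _ _.
Arguments mnom {S T} _ _.
Arguments mcst {S T} _ _.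
Arguments msrigid {S T} _ _.

Definition ext {V B : Type} (rho : V -> B) (b : B) : option V -> B :=
  fun o => match o with Some v => rho v | None => b end.

Section Semantics.
Variables (S : hsig) (M : kripke S).

Definition nval {V} (rho : V -> W M) (k : nterm S V) : W M :=
  match k with NNom n => nomI M n | NVar z => rho z end.

Fixpoint tval {V X} (rho : V -> W M) (eta : X -> A M) (w : W M)
  (t : term S V X) : A M :=
  match t with
  | TCst c => cstI M c w
  | TVar _ x => eta x
  | TAt _ k t' => tval rho eta (nval rho k) t'
  end.

Fixpoint sat {V X} (phi : form S V X) {struct phi}
  : (V -> W M) -> (X -> A M) -> W M -> Prop :=
  match phi in form _ V X return (V -> W M) -> (X -> A M) -> W M -> Prop with
  | FNom k => fun rho eta w => w = nval rho k
  | FEq t u => fun rho eta w => tval rho eta w t = tval rho eta w u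
  | FAt k p => fun rho eta w => sat p rho eta (nval rho k)
  | FNot p => fun rho eta w => ~ sat p rho eta w
  | FFalse => fun _ _ _ => False
  | FOr p q => fun rho eta w => sat p rho eta w \/ sat q rho eta w
  | FStore p => fun rho eta w => sat p (ext rho w) eta w
  | FExN p => fun rho eta w => exists w', sat p (ext rho w') eta w
  | FExV _ p => fun rho eta w => exists a, dom M w a /\ sat p rho (ext eta a) w
  end.

Definition empty_env {B : Type} : Empty_set -> B := fun e => match e with end.

Definition gsat (phi : Sen S) : Prop := forall w, sat phi empty_env empty_env w.

End Semantics.
Arguments gsat {S} M phi.
Arguments sat {S} M {V X} phi _ _ _.
Arguments tval {S} M {V X} _ _ _ _.
Arguments nval {S} M {V} _ _.

Definition gcons (S : hsig) (Phi Psi : Sen S -> Prop) : Prop :=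
  forall M : kripke S, (forall phi, Phi phi -> gsat M phi) ->
    forall psi, Psi psi -> gsat M psi.

Section Translation.
Variables (S T : hsig) (m : hmor S T).

Definition trN {V} (k : nterm S V) : nterm T V :=
  match k with NNom n => NNom (mnom m n) | NVar z => NVar z end.

Fixpoint trT {V X} (t : term S V X) : term T V X :=
  match t with
  | TCst c => TCst (mcst m c)
  | TVar h x => TVar (msrigid m h) x
  | TAt h k t' => TAt (msrigid m h) (trN k) (trT t')
  end.

Fixpoint trF {V X} (phi : form S V X) {struct phi} : form T V X :=
  match phi in form _ V X return form T V X with
  | FNom k => FNom (trN k)
  | FEq t u => FEq (trT t) (trT u)
  | FAt k p => FAt (trN k) (trF p)
  | FNot p => FNot (trF p)
  | FFalse => FFalse
  | FOr p q => FOr (trF p) (trF q)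
  | FStore p => FStore (trF p)
  | FExN p => FExN (trF p)
  | FExV h p => FExV (msrigid m h) (trF p)
  end.

Definition trSet (Phi : Sen S -> Prop) : Sen T -> Prop :=
  fun psi => exists phi, Phi phi /\ psi = trF phi.
End Translation.
Arguments trF {S T} m {V X} phi.
Arguments trSet {S T} m Phi _.

Arguments gcons {S} Phi Psi.

Definition CI_square (D D1 D2 D' : hsig)
  (chi1 : hmor D D1) (chi2 : hmor D D2)
  (ups1 : hmor D1 D') (ups2 : hmor D2 D') : Prop :=
  forall (Phi1 : Sen D1 -> Prop) (Phi2 : Sen D2 -> Prop),
    gcons (trSet ups1 Phi1) (trSet ups2 Phi2) ->
    exists Phi : Sen D -> Prop,
      gcons Phi1 (trSet chi1 Phi) /\ gcons (trSet chi2 Phi) Phi2.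

Arguments CI_square {D D1 D2 D'} chi1 chi2 ups1 ups2.

Inductive NomD := kD.
Inductive Nom1 := k1_k | k1_k1.
Inductive Nom2 := k2_k | k2_k2.
Inductive Nom' := k'_k | k'_k1 | k'_k2.
Inductive CstD := cD.
Inductive Cst2 := c2_c | c2_c2.

Definition no_rigid {C : Type} : C -> bool := fun _ => false.
Lemma no_rigid_sort {C : Type} (b : bool) :
  forall c : C, no_rigid c = true -> b = true.
Proof. discriminate. Qed.

Definition Delta : hsig := HSig NomD CstD false no_rigid (no_rigid_sort false).
Definition Delta1 : hsig := HSig Nom1 CstD true no_rigid (no_rigid_sort true).
Definition Delta2 : hsig := HSig Nom2 Cst2 false no_rigid (no_rigid_sort false).
Definition Delta' : hsig := HSig Nom' Cst2 true no_rigid (no_rigid_sort true).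

Lemma crig_none {C D : Type} (f : C -> D) :
  forall c : C, @no_rigid C c = true -> @no_rigid D (f c) = true.
Proof. discriminate. Qed.

Definition chi1 : hmor Delta Delta1 :=
  @HMor Delta Delta1 (fun _ => k1_k) (fun c => c) (fun _ => eq_refl)
    (crig_none (fun c : CstD => c)).
Definition chi2 : hmor Delta Delta2 :=
  @HMor Delta Delta2 (fun _ => k2_k) (fun _ => c2_c) (fun h => h)
    (crig_none (fun _ : CstD => c2_c)).
Definition ups1 : hmor Delta1 Delta' :=
  @HMor Delta1 Delta' (fun n => match n with k1_k => k'_k | k1_k1 => k'_k1 end)
    (fun _ => c2_c) (fun h => h) (crig_none (fun _ : CstD => c2_c)).
Definition ups2 : hmor Delta2 Delta' :=
  @HMor Delta2 Delta' (fun n => match n with k2_k => k'_k | k2_k2 => k'_k2 end)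
    (fun c => c) (fun _ => eq_refl) (crig_none (fun c : Cst2 => c)).

From Stdlib Require Import Classical.

(* Since s is rigid in Delta^1, the sentence "every element equals @_k c" forces
   the common carrier of a Delta'-model to be a singleton, so it entails c = c2.
   An interpolant would consist of Delta-sentences, but in Delta the sort s is
   flexible: terms are just c and equations are trivial, so Delta-sentences see
   only the frame of nominals.  They therefore cannot separate a one-world,
   one-element model of the premise from a one-world Delta^2-model with c <> c2. *)

Definition singleton_model : kripke Delta1.
Proof.
  refine (@Kripke Delta1 unit unit (fun _ => tt) (fun _ _ => True)
            (fun _ _ => tt) (fun _ _ => I) _ _).
  - intros _ w w' a; tauto.
  - intros c h; discriminate h.
Defined.

Definition c_neq_c2_model : kripke Delta2.
Proof.
  refine (@Kripke Delta2 unit bool (fun _ => tt) (fun _ _ => True)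
            (fun c _ => match c with c2_c => true | c2_c2 => false end)
            (fun _ _ => I) _ _).
  - intros h; discriminate h.
  - intros c h; discriminate h.
Defined.

Lemma term_Delta_is_c V X (t : term Delta V X) : t = @TCst Delta V X cD.
Proof.
  destruct t as [[]|h x|h k t]; [reflexivity | discriminate h | discriminate h].
Qed.

Lemma sat_chi1_singleton_iff_chi2_c_neq_c2 V X (phi : form Delta V X) :
  forall (rho : V -> unit) (eta1 : X -> unit) (eta2 : X -> bool) (w : unit),
    sat singleton_model (trF chi1 phi) rho eta1 w <->
    sat c_neq_c2_model (trF chi2 phi) rho eta2 w.
Proof.
  induction phi as [V X k|V X t u|V X k phi IH|V X phi IH|V X
                   |V X phi IH psi IH'|V X phi IH|V X phi IH|V X h phi IH];
    intros rho eta1 eta2 w; simpl.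
  - split; intros _; destruct w, (nval _ _ _); reflexivity.
  - rewrite (term_Delta_is_c _ _ t), (term_Delta_is_c _ _ u).
    split; intros _; reflexivity.
  - destruct (nval _ _ (trN _ _ chi1 k)), (nval _ _ (trN _ _ chi2 k)); apply IH.
  - rewrite (IH rho eta1 eta2 w); tauto.
  - tauto.
  - rewrite (IH rho eta1 eta2 w), (IH' rho eta1 eta2 w); tauto.
  - apply IH.
  - split; intros [w' Hw']; exists w'; apply (IH _ eta1 eta2); exact Hw'.
  - discriminate h.
Qed.

Lemma gsat_chi1_singleton_iff_chi2_c_neq_c2 (phi : Sen Delta) :
  gsat singleton_model (trF chi1 phi) <-> gsat c_neq_c2_model (trF chi2 phi).
Proof.
  split; intros H w; apply (sat_chi1_singleton_iff_chi2_c_neq_c2 _ _ phi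
                              empty_env empty_env empty_env w), H.
Qed.

Definition Delta1_sort_rigid : srigid Delta1 = true := eq_refl.

Definition all_eq_at_k_c : Sen Delta1 :=
  FNot (FExV Delta1_sort_rigid
    (FNot (FEq (TVar Delta1_sort_rigid None)
               (TAt Delta1_sort_rigid (@NNom Delta1 _ k1_k) (@TCst Delta1 _ _ cD))))).

Definition c_eq_c2 : Sen Delta2 := FEq (@TCst Delta2 _ _ c2_c) (@TCst Delta2 _ _ c2_c2).

Lemma all_eq_at_k_c_entails_c_eq_c2 :
  gcons (trSet ups1 (eq all_eq_at_k_c)) (trSet ups2 (eq c_eq_c2)).
Proof.
  intros M HM psi [p [<- ->]] w; simpl.
  assert (Hall := HM _ (ex_intro _ all_eq_at_k_c (conj eq_refl eq_refl)) w).
  simpl in Hall.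
  assert (Hsingle : forall a, dom M w a -> a = cstI M c2_c (nomI M k'_k)).
  { intros a Ha. apply NNPP; intro Hne. apply Hall. exists a; split; assumption. }
  rewrite (Hsingle _ (cstI_dom _ M c2_c w)), (Hsingle _ (cstI_dom _ M c2_c2 w)).
  reflexivity.
Qed.

Lemma singleton_model_sat_all_eq_at_k_c : gsat singleton_model all_eq_at_k_c.
Proof. intros w [[] [_ Hne]]; apply Hne; reflexivity. Qed.

Lemma c_neq_c2_model_not_sat_c_eq_c2 : ~ gsat c_neq_c2_model c_eq_c2.
Proof. intros H; discriminate (H tt). Qed.

Theorem lemma5p14 : ~ CI_square chi1 chi2 ups1 ups2.
Proof.
  intros CI.
  destruct (CI _ _ all_eq_at_k_c_entails_c_eq_c2) as [Phi [Hchi1 Hchi2]].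
  apply c_neq_c2_model_not_sat_c_eq_c2.
  apply (Hchi2 c_neq_c2_model); [|reflexivity].
  intros p [phi [Hphi ->]].
  apply gsat_chi1_singleton_iff_chi2_c_neq_c2.
  apply (Hchi1 singleton_model).
  - intros q <-; exact singleton_model_sat_all_eq_at_k_c.
  - exists phi; split; [exact Hphi | reflexivity].
Qed.
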